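(* Let $\mu_Y\in\mathbb{R}$, $\sigma_Y>0$, $n\ge 2$, and let $X_1,\dots,X_n$ be i.i.d. with $X_i\sim LN(\mu_Y,\sigma_Y^2)$. With $A_n=\frac1n\sum_{i=1}^n X_i$, $H_n=n\big/\sum_{i=1}^n (1/X_i)$, $\hat k_n=\frac{n}{n-1}\left(\frac{A_n}{H_n}-1\right)$ and $k=C_v^2=\exp(\sigma_Y^2)-1$, $$\operatorname{Var}(\hat k_n)=\frac{2}{n-1}\,k^2\left(1+k+\frac{k^2}{2n}\right),\qquad \operatorname{sd}(\hat k_n)=k\sqrt{\frac{2}{n-1}\left(1+k+\frac{k^2}{2n}\right)}.$$
   Context: $X\sim LN(\mu_Y,\sigma_Y^2)$ means $\ln X\sim N(\mu_Y,\sigma_Y^2)$. For such $X$, $C_v=\sqrt{\operatorname{Var}(X)}/E[X]$ is the coefficient of variation and $k=E[X]\,E[1/X]-1$; one has $k=C_v^2=\exp(\sigma_Y^2)-1$. $\operatorname{sd}$ denotes the square root of the variance. *)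

(* Probability theory is not available, so the
   law of (X_1,...,X_n) i.i.d. LN(mu, sigma^2) is represented through its joint
   density, and expectations are iterated improper Riemann integrals. *)
From Stdlib Require Import Reals Lra Lia.
Open Scope R_scope.

Definition ImpInt (f : R -> R) (l : R) : Prop :=
  forall eps : R, 0 < eps ->
    exists M : R, forall a b : R, a <= - M -> M <= b ->
      exists pr : Riemann_integrable f a b, Rabs (RiemannInt pr - l) < eps.

Definition upd (v : nat -> R) (i : nat) (x : R) : nat -> R :=
  fun j => if Nat.eq_dec j i then x else v j.

(* Iterated improper integral over R^m of g, integrating the coordinates
   0, ..., m-1 (outermost = coordinate m-1); IterInt m g l means the iterated
   integral exists (every inner integral exists) and equals l. *)
Fixpoint IterInt (m : nat) (g : (nat -> R) -> R) : R -> Prop :=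
  match m with
  | O => fun l => l = g (fun _ => 0)
  | S m' => fun l =>
      exists h : R -> R, ImpInt h l /\
        forall x : R, IterInt m' (fun v => g (upd v m' x)) (h x)
  end.

Fixpoint sumR (n : nat) (f : nat -> R) : R :=
  match n with O => 0 | S n' => sumR n' f + f n' end.
Fixpoint prodR (n : nat) (f : nat -> R) : R :=
  match n with O => 1 | S n' => prodR n' f * f n' end.

(* density of LN(mu, s^2): ln X ~ N(mu, s^2), s > 0 the standard deviation *)
Definition lnpdf (mu s x : R) : R :=
  if Rlt_dec 0 x
  then / (x * s * sqrt (2 * PI)) * exp (- ((ln x - mu) ^ 2) / (2 * s ^ 2))
  else 0.

Definition joint_lnpdf (mu s : R) (n : nat) (v : nat -> R) : R :=
  prodR n (fun i => lnpdf mu s (v i)).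

Definition HasExpect (mu s : R) (n : nat) (f : (nat -> R) -> R) (l : R) : Prop :=
  IterInt n (fun v => f v * joint_lnpdf mu s n v) l.

Definition HasVar (mu s : R) (n : nat) (f : (nat -> R) -> R) (V : R) : Prop :=
  exists m1 m2 : R, HasExpect mu s n f m1 /\
    HasExpect mu s n (fun v => (f v) ^ 2) m2 /\ V = m2 - m1 ^ 2.

Definition A_n (n : nat) (v : nat -> R) : R := sumR n v / INR n.
Definition H_n (n : nat) (v : nat -> R) : R := INR n / sumR n (fun i => / v i).
Definition khat (n : nat) (v : nat -> R) : R :=
  INR n / (INR n - 1) * (A_n n v / H_n n v - 1).

(* With P = X_1 + ... + X_n and Q = 1/X_1 + ... + 1/X_n one has
   khat_n = n/(n-1) (PQ/n^2 - 1), so Var(khat_n) only involves E[PQ] and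
   E[P^2 Q^2].  Expanding (P + X_n)^a (Q + 1/X_n)^b binomially reduces the
   joint moments E[P^a Q^b] to the lognormal moments E[X^r] = exp(r mu + r^2 s^2/2),
   and these are Gaussian integrals: after the substitution
   t = (ln x - mu - r s^2)/(sqrt 2 s) the integrand has the explicit antiderivative
   E[X^r]/sqrt(pi) * int_0^t exp(-u^2) du.  The Gaussian integral itself comes from
   the identity (int_0^x exp(-t^2) dt)^2 + int_0^1 exp(-x^2 (1+t^2))/(1+t^2) dt = pi/4,
   whose left-hand side has derivative 0. *)

From Stdlib Require Import Reals Lra Lia.
From Coquelicot Require Import Coquelicot.
Open Scope R_scope.

Lemma continuous_of_ex_derive (f : R -> R) (x : R) : ex_derive f x -> continuous f x.
Proof. exact (@ex_derive_continuous R_AbsRing R_NormedModule f x). Qed.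

Lemma ex_RInt_continuous_R (f : R -> R) (a b : R) :
  (forall x, continuous f x) -> ex_RInt f a b.
Proof. intros Hf. apply (@ex_RInt_continuous R_CompleteNormedModule). auto. Qed.

Lemma one_add_sqr_pos (t : R) : 0 < 1 + t * t.
Proof. nra. Qed.

Lemma exp_le_compat (x y : R) : x <= y -> exp x <= exp y.
Proof. intros [H | ->]; [apply Rlt_le, exp_increasing, H | apply Rle_refl]. Qed.

Definition gauss (t : R) : R := exp (- (t * t)).
Definition gauss_int (x : R) : R := RInt gauss 0 x.

Definition gauss_aux_integrand (x t : R) : R := exp (- (x * x) * (1 + t * t)) / (1 + t * t).
Definition gauss_aux (x : R) : R := RInt (gauss_aux_integrand x) 0 1.

Lemma continuous_gauss (t : R) : continuous gauss t.
Proof. apply continuous_of_ex_derive. unfold gauss. auto_derive. easy. Qed.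

Lemma is_derive_gauss_int (x : R) : is_derive gauss_int x (gauss x).
Proof.
  apply (@is_derive_RInt R_CompleteNormedModule) with 0.
  - apply filter_forall. intros y.
    apply (@RInt_correct R_CompleteNormedModule), ex_RInt_continuous_R, continuous_gauss.
  - apply continuous_gauss.
Qed.

Lemma gauss_int_comp_scal (a x : R) : RInt (fun t => a * gauss (a * t)) 0 x = gauss_int (a * x).
Proof.
  assert (E := @RInt_comp_lin R_CompleteNormedModule gauss a 0 0 x
                 (ex_RInt_continuous_R _ _ _ continuous_gauss)).
  rewrite Rmult_0_r, !Rplus_0_r in E. unfold gauss_int. rewrite <- E.
  apply RInt_ext. intros t _. rewrite Rplus_0_r. reflexivity.
Qed.

Lemma continuous_gauss_aux_integrand (x t : R) : continuous (gauss_aux_integrand x) t.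
Proof.
  apply continuous_of_ex_derive. unfold gauss_aux_integrand.
  generalize (one_add_sqr_pos t). intros Ht. auto_derive. lra.
Qed.

Lemma is_derive_gauss_aux_integrand (x t : R) :
  is_derive (fun y => gauss_aux_integrand y t) x (- 2 * x * exp (- (x * x) * (1 + t * t))).
Proof.
  unfold gauss_aux_integrand. generalize (one_add_sqr_pos t). intros Ht.
  auto_derive; [lra | field; lra].
Qed.

Lemma continuity_2d_gauss_aux_derivative (x t : R) :
  continuity_2d_pt (fun y u => - 2 * y * exp (- (y * y) * (1 + u * u))) x t.
Proof.
  apply continuity_2d_pt_mult.
  - apply continuity_2d_pt_mult; [apply continuity_2d_pt_const | apply continuity_2d_pt_id1].
  - apply continuity_1d_2d_pt_comp; [apply derivable_continuous_pt, derivable_pt_exp |].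
    apply continuity_2d_pt_mult.
    + apply continuity_2d_pt_opp. apply continuity_2d_pt_mult; apply continuity_2d_pt_id1.
    + apply continuity_2d_pt_plus; [apply continuity_2d_pt_const |].
      apply continuity_2d_pt_mult; apply continuity_2d_pt_id2.
Qed.

(* Differentiation under the integral sign, then the substitution u = x t. *)
Lemma is_derive_gauss_aux (x : R) : is_derive gauss_aux x (- 2 * gauss x * gauss_int x).
Proof.
  replace (- 2 * gauss x * gauss_int x)
    with (RInt (fun t => Derive (fun y => gauss_aux_integrand y t) x) 0 1).
  - apply (is_derive_RInt_param gauss_aux_integrand 0 1 x).
    + apply filter_forall. intros y t _. eexists. apply is_derive_gauss_aux_integrand.
    + intros t _. apply (continuity_2d_pt_ext _ _ _ _ (fun y u =>
        eq_sym (is_derive_unique _ _ _ (is_derive_gauss_aux_integrand y u)))).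
      apply continuity_2d_gauss_aux_derivative.
    + apply filter_forall. intros y. apply ex_RInt_continuous_R, continuous_gauss_aux_integrand.
  - replace (gauss_int x) with (gauss_int (x * 1)) by (rewrite Rmult_1_r; reflexivity).
    rewrite <- gauss_int_comp_scal, <- (@RInt_scal R_CompleteNormedModule).
    + apply RInt_ext. intros t _. erewrite is_derive_unique by apply is_derive_gauss_aux_integrand.
      unfold gauss, scal; simpl; unfold mult; simpl.
      replace (- (x * x) * (1 + t * t)) with (- (x * x) + - ((x * t) * (x * t))) by ring.
      rewrite exp_plus. ring.
    + apply ex_RInt_continuous_R. intros t.
      apply continuous_of_ex_derive. unfold gauss. auto_derive. easy.
Qed.

Lemma gauss_int_0 : gauss_int 0 = 0.
Proof. apply (@RInt_point R_CompleteNormedModule). Qed.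

Lemma gauss_aux_0 : gauss_aux 0 = PI / 4.
Proof.
  rewrite <- atan_1. unfold gauss_aux.
  replace (atan 1) with (atan 1 - atan 0) by (rewrite atan_0; ring).
  apply is_RInt_unique.
  apply (@is_RInt_ext R_CompleteNormedModule (fun t => / (1 + t ^ 2))).
  { intros t _.
    change (/ (1 + t ^ 2) = exp (- (0 * 0) * (1 + t * t)) / (1 + t * t)).
    rewrite Rmult_0_l, Ropp_0, Rmult_0_l, exp_0. field. generalize (one_add_sqr_pos t); lra. }
  apply (@is_RInt_derive R_CompleteNormedModule).
  - intros y _. apply is_derive_Reals, derivable_pt_lim_atan.
  - intros y _. apply continuous_of_ex_derive. auto_derive.
    generalize (one_add_sqr_pos y); simpl; nra.
Qed.

Lemma is_derive_0_const (h : R -> R) :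
  (forall y, is_derive h y 0) -> forall x y, h x = h y.
Proof.
  intros Hh x y.
  assert (I := @is_RInt_derive R_CompleteNormedModule h (fun _ => 0) y x
                 (fun z _ => Hh z) (fun z _ => continuous_const _ z)).
  apply is_RInt_unique in I. rewrite RInt_const in I.
  unfold scal, minus, plus, opp in I; simpl in I; unfold mult in I; simpl in I. lra.
Qed.

Lemma gauss_int_sqr_add_aux (x : R) : gauss_int x ^ 2 + gauss_aux x = PI / 4.
Proof.
  rewrite <- gauss_aux_0, <- (Rplus_0_l (gauss_aux 0)).
  replace 0 with (gauss_int 0 ^ 2) at 1 by (rewrite gauss_int_0; ring).
  apply (is_derive_0_const (fun y => gauss_int y ^ 2 + gauss_aux y)). intros y.
  replace 0 with (INR 2 * gauss y * gauss_int y ^ 1 + - 2 * gauss y * gauss_int y)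
    by (simpl; ring).
  apply (@is_derive_plus R_AbsRing R_NormedModule).
  - apply is_derive_pow, is_derive_gauss_int.
  - apply is_derive_gauss_aux.
Qed.

Lemma gauss_aux_bounds (x : R) : 0 <= gauss_aux x <= gauss x.
Proof.
  assert (Hint : ex_RInt (gauss_aux_integrand x) 0 1)
    by apply ex_RInt_continuous_R, continuous_gauss_aux_integrand.
  unfold gauss_aux. split.
  - apply RInt_ge_0; [lra | exact Hint |]. intros t _.
    apply Rlt_le, Rdiv_lt_0_compat; [apply exp_pos | apply one_add_sqr_pos].
  - apply Rle_trans with (RInt (fun _ => gauss x) 0 1).
    2:{ rewrite RInt_const. unfold scal; simpl; unfold mult; simpl. lra. }
    apply RInt_le; [lra | exact Hint | apply ex_RInt_const |]. intros t _.
    generalize (one_add_sqr_pos t). intros Ht. unfold gauss_aux_integrand, gauss.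
    apply Rle_trans with (exp (- (x * x) * (1 + t * t))).
    + unfold Rdiv. rewrite <- (Rmult_1_r (exp _)) at 2.
      apply Rmult_le_compat_l; [apply Rlt_le, exp_pos |].
      rewrite <- Rinv_1. apply Rinv_le_contravar; nra.
    + apply exp_le_compat. nra.
Qed.

Lemma gauss_int_ge0 (x : R) : 0 <= x -> 0 <= gauss_int x.
Proof.
  intros Hx. apply RInt_ge_0; [exact Hx | apply ex_RInt_continuous_R, continuous_gauss |].
  intros t _. apply Rlt_le, exp_pos.
Qed.

Lemma gauss_int_opp (x : R) : gauss_int (- x) = - gauss_int x.
Proof.
  replace (- x) with (-1 * x) by ring. rewrite <- gauss_int_comp_scal.
  rewrite (RInt_ext _ (fun t => -1 * gauss t)).
  - rewrite (@RInt_scal R_CompleteNormedModule); [| apply ex_RInt_continuous_R, continuous_gauss].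
    unfold scal; simpl; unfold mult; simpl. fold (gauss_int x). ring.
  - intros t _. unfold gauss. do 3 f_equal. ring.
Qed.

Lemma is_lim_gauss (x : Rbar) : is_lim (fun t => t * t) x p_infty -> is_lim gauss x 0.
Proof.
  intros Hsq. apply (is_lim_comp exp (fun t => - (t * t)) x 0 m_infty).
  - apply is_lim_exp_m.
  - apply (is_lim_opp _ x p_infty), Hsq.
  - apply filter_forall. discriminate.
Qed.

Lemma is_lim_gauss_int_p : is_lim gauss_int p_infty (sqrt PI / 2).
Proof.
  assert (Haux : is_lim gauss_aux p_infty 0).
  { apply (is_lim_le_le_loc (fun _ => 0) gauss).
    - apply filter_forall. apply gauss_aux_bounds.
    - apply is_lim_const.
    - apply is_lim_gauss. apply (is_lim_mult _ _ p_infty p_infty p_infty); try apply is_lim_id.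
      simpl. tauto. }
  apply (is_lim_ext_loc (fun x => sqrt (PI / 4 - gauss_aux x))).
  - exists 0. intros x Hx. rewrite <- (gauss_int_sqr_add_aux x).
    replace (gauss_int x ^ 2 + gauss_aux x - gauss_aux x) with (gauss_int x ^ 2) by ring.
    apply sqrt_pow2, gauss_int_ge0. lra.
  - replace (sqrt PI / 2) with (sqrt (PI / 4 - 0)).
    + apply (is_lim_comp_continuous gauss_aux (fun y => sqrt (PI / 4 - y))); [exact Haux |].
      apply continuous_sqrt_comp, continuous_of_ex_derive. auto_derive. easy.
    + rewrite Rminus_0_r, sqrt_div_alt by lra.
      replace 4 with (2 ^ 2) by ring. rewrite sqrt_pow2; lra.
Qed.

Lemma is_lim_gauss_int_m : is_lim gauss_int m_infty (- (sqrt PI / 2)).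
Proof.
  apply (is_lim_ext (fun x => - gauss_int (- x))).
  { intros x. rewrite gauss_int_opp, Ropp_involutive. reflexivity. }
  apply (is_lim_opp _ m_infty (sqrt PI / 2)).
  apply (is_lim_comp gauss_int Ropp m_infty (sqrt PI / 2) p_infty).
  - apply is_lim_gauss_int_p.
  - apply (is_lim_opp _ m_infty m_infty), is_lim_id.
  - apply filter_forall. discriminate.
Qed.

Lemma ImpInt_RInt_iff (f : R -> R) (l : R) :
  ImpInt f l <->
  forall eps, 0 < eps -> exists M, forall a b, a <= - M -> M <= b ->
    ex_RInt f a b /\ Rabs (RInt f a b - l) < eps.
Proof.
  split; intros H eps Heps; destruct (H eps Heps) as [M HM]; exists M; intros a b Ha Hb.
  - destruct (HM a b Ha Hb) as [pr Hpr]. split.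
    + apply ex_RInt_Reals_1, pr.
    + rewrite (RInt_Reals _ _ _ pr). exact Hpr.
  - destruct (HM a b Ha Hb) as [Hex Hlt].
    exists (ex_RInt_Reals_0 _ _ _ Hex). rewrite <- RInt_Reals. exact Hlt.
Qed.

Section SupportedOnPositives.
Variables (f F : R -> R) (Lm Lp : R).
Hypothesis f_nonpos : forall x, x <= 0 -> f x = 0.
Hypothesis f_cont_pos : forall x, 0 < x -> continuous f x.
Hypothesis f_lim_0 : filterlim f (at_right 0) (locally 0).
Hypothesis F_deriv : forall x, 0 < x -> is_derive F x (f x).
Hypothesis F_lim_0 : filterlim F (at_right 0) (locally Lm).
Hypothesis F_lim_p : is_lim F p_infty Lp.

Lemma supported_pos_continuous (x : R) : continuous f x.
Proof.
  destruct (Rlt_or_le 0 x) as [Hx | [Hx | ->]].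
  - exact (f_cont_pos x Hx).
  - apply (continuous_ext_loc _ (fun _ => 0)); [| apply continuous_const].
    apply (filter_imp (fun y => y < 0)); [| exact (open_lt 0 x Hx)].
    intros y Hy. symmetry. apply f_nonpos. lra.
  - intros P HP. rewrite (f_nonpos 0 (Rle_refl 0)) in HP.
    destruct (f_lim_0 P HP) as [d Hd]. exists d. intros y Hy.
    destruct (Rlt_or_le 0 y) as [Hpos | Hle].
    + exact (Hd y Hy Hpos).
    + rewrite (f_nonpos y Hle). apply locally_singleton, HP.
Qed.

Lemma RInt_nonpos_half_line (a : R) : a <= 0 -> RInt f a 0 = 0.
Proof.
  intros Ha. rewrite (RInt_ext _ (fun _ => 0)).
  - rewrite RInt_const. unfold scal; simpl; unfold mult; simpl. ring.
  - intros x Hx. rewrite Rmin_left, Rmax_right in Hx by lra. apply f_nonpos. lra.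
Qed.

(* Let the lower endpoint e tend to 0+ in RInt f e b = F b - F e. *)
Lemma RInt_from_0 (b : R) : 0 < b -> RInt f 0 b = F b - Lm.
Proof.
  intros Hb. apply (filterlim_locally_unique (F := at_right 0) (fun e => RInt f e b)).
  - apply (filterlim_filter_le_1 (F := locally 0)); [apply filter_le_within |].
    apply (continuous_RInt_2 f 0 b). apply filter_forall. intros z.
    apply (@RInt_correct R_CompleteNormedModule), ex_RInt_continuous_R, supported_pos_continuous.
  - apply (filterlim_ext_loc (fun e => F b - F e)).
    + exists (mkposreal b Hb). intros e He Hpos.
      change (Rabs (e - 0) < b) in He. apply Rabs_def2 in He. symmetry. apply is_RInt_unique.
      apply (@is_RInt_derive R_CompleteNormedModule).
      * intros x Hx. rewrite Rmin_left, Rmax_right in Hx by lra. apply F_deriv. lra.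
      * intros x _. apply supported_pos_continuous.
    + apply (filterlim_comp _ _ _ F (fun y => F b - y) _ (locally Lm) _ F_lim_0).
      apply continuous_of_ex_derive. auto_derive. easy.
Qed.

Lemma ImpInt_of_antiderivative : ImpInt f (Lp - Lm).
Proof.
  apply ImpInt_RInt_iff. intros eps Heps.
  destruct (F_lim_p (fun y => Rabs (y - Lp) < eps)) as [M HM].
  { exists (mkposreal eps Heps). intros y Hy. exact Hy. }
  exists (Rmax 1 (M + 1)). intros a b Ha Hb.
  generalize (Rmax_l 1 (M + 1)) (Rmax_r 1 (M + 1)). intros H1 H2. split.
  - apply ex_RInt_continuous_R, supported_pos_continuous.
  - rewrite <- (@RInt_Chasles R_CompleteNormedModule f a 0 b)
      by apply ex_RInt_continuous_R, supported_pos_continuous.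
    unfold plus; simpl.
    rewrite RInt_nonpos_half_line, RInt_from_0 by lra.
    replace (0 + (F b - Lm) - (Lp - Lm)) with (F b - Lp) by ring. apply HM. lra.
Qed.

End SupportedOnPositives.

Lemma ImpInt_ext (f g : R -> R) (l : R) : (forall x, f x = g x) -> ImpInt f l -> ImpInt g l.
Proof.
  intros E H. rewrite ImpInt_RInt_iff in *. intros eps Heps.
  destruct (H eps Heps) as [M HM]. exists M. intros a b Ha Hb.
  destruct (HM a b Ha Hb) as [Hex Hlt]. rewrite <- (RInt_ext f g) by auto. split.
  - apply (ex_RInt_ext f); auto.
  - exact Hlt.
Qed.

Lemma ImpInt_plus (f g : R -> R) (l1 l2 : R) :
  ImpInt f l1 -> ImpInt g l2 -> ImpInt (fun x => f x + g x) (l1 + l2).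
Proof.
  rewrite !ImpInt_RInt_iff. intros H1 H2 eps Heps.
  destruct (H1 (eps / 2)) as [M1 HM1]; [lra |].
  destruct (H2 (eps / 2)) as [M2 HM2]; [lra |].
  exists (Rmax M1 M2). intros a b Ha Hb.
  generalize (Rmax_l M1 M2) (Rmax_r M1 M2). intros HM1m HM2m.
  destruct (HM1 a b) as [Hex1 Hlt1]; [lra | lra |].
  destruct (HM2 a b) as [Hex2 Hlt2]; [lra | lra |].
  split.
  - apply (@ex_RInt_plus R_NormedModule); assumption.
  - rewrite (@RInt_plus R_CompleteNormedModule) by assumption. unfold plus; simpl.
    replace (RInt f a b + RInt g a b - (l1 + l2))
      with ((RInt f a b - l1) + (RInt g a b - l2)) by ring.
    eapply Rle_lt_trans; [apply Rabs_triang | lra].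
Qed.

Lemma ImpInt_scal (f : R -> R) (l k : R) : ImpInt f l -> ImpInt (fun x => k * f x) (k * l).
Proof.
  rewrite !ImpInt_RInt_iff. intros H eps Heps.
  assert (Hk : 0 < Rabs k + 1) by (generalize (Rabs_pos k); lra).
  destruct (H (eps / (Rabs k + 1))) as [M HM]; [apply Rdiv_lt_0_compat; lra |].
  exists M. intros a b Ha Hb. destruct (HM a b Ha Hb) as [Hex Hlt]. split.
  - apply (@ex_RInt_scal R_NormedModule), Hex.
  - rewrite (@RInt_scal R_CompleteNormedModule) by exact Hex.
    unfold scal; simpl; unfold mult; simpl.
    rewrite <- Rmult_minus_distr_l, Rabs_mult.
    apply Rle_lt_trans with (Rabs k * (eps / (Rabs k + 1))).
    + apply Rmult_le_compat_l; [apply Rabs_pos | lra].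
    + apply (Rmult_lt_reg_r (Rabs k + 1)); [exact Hk |].
      field_simplify; [generalize (Rabs_pos k); nra | lra].
Qed.

Lemma ImpInt_sum (F : nat -> R -> R) (L : nat -> R) (N : nat) :
  (forall i, (i <= N)%nat -> ImpInt (F i) (L i)) ->
  ImpInt (fun x => sum_f_R0 (fun i => F i x) N) (sum_f_R0 L N).
Proof.
  induction N as [| N IH]; intros H; simpl.
  - apply H. lia.
  - apply (ImpInt_plus (fun x => sum_f_R0 (fun i => F i x) N)); [apply IH; auto | apply H; lia].
Qed.

Lemma IterInt_ext (n : nat) : forall (f g : (nat -> R) -> R) (l : R),
  (forall v, f v = g v) -> IterInt n f l -> IterInt n g l.
Proof.
  induction n as [| n IH]; intros f g l E H; simpl in *.
  - rewrite H. apply E.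
  - destruct H as [h [Hh Hin]]. exists h. split; [exact Hh |].
    intros x. apply (IH (fun v => f (upd v n x))); auto.
Qed.

Lemma IterInt_plus (n : nat) : forall (f g : (nat -> R) -> R) (l1 l2 : R),
  IterInt n f l1 -> IterInt n g l2 -> IterInt n (fun v => f v + g v) (l1 + l2).
Proof.
  induction n as [| n IH]; intros f g l1 l2 H1 H2; simpl in *.
  - rewrite H1, H2. reflexivity.
  - destruct H1 as [h1 [Hh1 Hin1]], H2 as [h2 [Hh2 Hin2]].
    exists (fun x => h1 x + h2 x). split; [apply ImpInt_plus; assumption |].
    intros x. apply (IH (fun v => f (upd v n x)) (fun v => g (upd v n x))); auto.
Qed.

Lemma IterInt_scal (n : nat) : forall (f : (nat -> R) -> R) (l k : R),
  IterInt n f l -> IterInt n (fun v => k * f v) (k * l).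
Proof.
  induction n as [| n IH]; intros f l k H; simpl in *.
  - rewrite H. reflexivity.
  - destruct H as [h [Hh Hin]].
    exists (fun x => k * h x). split; [apply ImpInt_scal, Hh |].
    intros x. apply (IH (fun v => f (upd v n x))), Hin.
Qed.

Lemma IterInt_sum (n : nat) (F : nat -> (nat -> R) -> R) (L : nat -> R) (N : nat) :
  (forall i, (i <= N)%nat -> IterInt n (F i) (L i)) ->
  IterInt n (fun v => sum_f_R0 (fun i => F i v) N) (sum_f_R0 L N).
Proof.
  induction N as [| N IH]; intros H; simpl.
  - apply H. lia.
  - apply (IterInt_plus n (fun v => sum_f_R0 (fun i => F i v) N));
      [apply IH; auto | apply H; lia].
Qed.

Lemma filterlim_affine_m {T} (F : (T -> Prop) -> Prop) (g : T -> R) (c d : R) :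
  Filter F -> 0 < d -> filterlim g F (Rbar_locally m_infty) ->
  filterlim (fun x => (g x - c) / d) F (Rbar_locally m_infty).
Proof.
  intros HF Hd Hg P [M HM]. unfold filtermap. apply (filter_imp (fun y => g y < M * d + c)).
  - intros y Hy. apply HM. apply (Rmult_lt_reg_r d); [exact Hd |].
    unfold Rdiv. rewrite Rmult_assoc, Rinv_l by lra. lra.
  - apply (Hg (fun y => y < M * d + c)). exists (M * d + c). tauto.
Qed.

Lemma filterlim_affine_p {T} (F : (T -> Prop) -> Prop) (g : T -> R) (c d : R) :
  Filter F -> 0 < d -> filterlim g F (Rbar_locally p_infty) ->
  filterlim (fun x => (g x - c) / d) F (Rbar_locally p_infty).
Proof.
  intros HF Hd Hg P [M HM]. unfold filtermap. apply (filter_imp (fun y => M * d + c < g y)).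
  - intros y Hy. apply HM. apply (Rmult_lt_reg_r d); [exact Hd |].
    unfold Rdiv. rewrite Rmult_assoc, Rinv_l by lra. lra.
  - apply (Hg (fun y => M * d + c < y)). exists (M * d + c). tauto.
Qed.

Lemma sqrt2_pos : 0 < sqrt 2.
Proof. apply sqrt_lt_R0. lra. Qed.

Lemma sqrtPI_pos : 0 < sqrt PI.
Proof. apply sqrt_lt_R0, PI_RGT_0. Qed.

Lemma filterlim_scal_l_R {T} (F : (T -> Prop) -> Prop) (g : T -> R) (c l : R) :
  filterlim g F (locally l) -> filterlim (fun x => c * g x) F (locally (c * l)).
Proof.
  intros Hg. apply (filterlim_comp _ _ _ g (fun y => c * y) F (locally l) _ Hg).
  apply continuous_of_ex_derive. auto_derive. easy.
Qed.

Section LognormalMoment.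
Variables (mu s : R).
Hypothesis s_pos : 0 < s.

Definition lnmoment (r : R) : R := exp (r * mu + r ^ 2 * s ^ 2 / 2).
Definition lnzscore (r x : R) : R := (ln x - (mu + r * s ^ 2)) / (sqrt 2 * s).

Lemma exp_complete_square (r L : R) :
  exp (r * L) * exp (- (L - mu) ^ 2 / (2 * s ^ 2))
  = lnmoment r * gauss ((L - (mu + r * s ^ 2)) / (sqrt 2 * s)).
Proof.
  assert (H2 : sqrt 2 ^ 2 = 2) by (apply pow2_sqrt; lra).
  generalize sqrt2_pos. intros Hs2.
  unfold lnmoment, gauss. rewrite <- !exp_plus. f_equal.
  field_simplify; [| lra | lra]. rewrite H2. field. lra.
Qed.

Lemma lnpdf_pos (x : R) :
  0 < x -> lnpdf mu s x = exp (- (ln x - mu) ^ 2 / (2 * s ^ 2)) / (x * s * sqrt (2 * PI)).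
Proof.
  intros Hx. unfold lnpdf. destruct (Rlt_dec 0 x) as [_ | Hn]; [| lra].
  unfold Rdiv. ring.
Qed.

Lemma lnpdf_nonpos (x : R) : x <= 0 -> lnpdf mu s x = 0.
Proof. intros Hx. unfold lnpdf. destruct (Rlt_dec 0 x); [lra | reflexivity]. Qed.

Lemma lnpdf_moment_density (r x : R) : 0 < x ->
  exp (r * ln x) * lnpdf mu s x
  = lnmoment r / sqrt PI * gauss (lnzscore r x) / (sqrt 2 * s * x).
Proof.
  intros Hx. generalize sqrt2_pos sqrtPI_pos. intros H2 HPI.
  rewrite lnpdf_pos, sqrt_mult by (try lra; apply Rlt_le, PI_RGT_0).
  unfold Rdiv at 1. rewrite <- Rmult_assoc, exp_complete_square. unfold lnzscore.
  field. repeat split; lra.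
Qed.

(* Absorbing the factor 1/x exhibits the Gaussian decay of the integrand at 0. *)
Lemma lnpdf_moment_density_shift (r x : R) : 0 < x ->
  exp (r * ln x) * lnpdf mu s x
  = lnmoment (r - 1) / (sqrt 2 * s * sqrt PI) * gauss (lnzscore (r - 1) x).
Proof.
  intros Hx. generalize sqrt2_pos sqrtPI_pos. intros H2 HPI.
  replace (r * ln x) with ((r - 1) * ln x + ln x) by ring.
  rewrite exp_plus, exp_ln by exact Hx.
  replace (exp ((r - 1) * ln x) * x * lnpdf mu s x)
    with (x * (exp ((r - 1) * ln x) * lnpdf mu s x)) by ring.
  rewrite lnpdf_moment_density by exact Hx. field. repeat split; lra.
Qed.

Lemma filterlim_lnzscore_0 (r : R) : filterlim (lnzscore r) (at_right 0) (Rbar_locally m_infty).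
Proof.
  apply filterlim_affine_m; [apply at_right_proper_filter | | apply is_lim_ln_0].
  generalize sqrt2_pos. nra.
Qed.

Lemma is_lim_lnzscore_p (r : R) : is_lim (lnzscore r) p_infty p_infty.
Proof.
  apply filterlim_affine_p; [apply (Rbar_locally_filter p_infty) | | exact is_lim_ln_p].
  generalize sqrt2_pos. nra.
Qed.

Lemma continuous_lnpdf_moment (r x : R) :
  0 < x -> continuous (fun y => exp (r * ln y) * lnpdf mu s y) x.
Proof.
  intros Hx. generalize sqrt2_pos sqrtPI_pos. intros H2 HPI.
  apply (continuous_ext_loc _ (fun y =>
    lnmoment (r - 1) / (sqrt 2 * s * sqrt PI) * gauss (lnzscore (r - 1) y))).
  - apply (filter_imp (fun y => 0 < y)); [| exact (open_gt 0 x Hx)].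
    intros y Hy. symmetry. apply lnpdf_moment_density_shift, Hy.
  - apply continuous_of_ex_derive. unfold gauss, lnzscore. auto_derive. nra.
Qed.

Lemma filterlim_lnpdf_moment_0 (r : R) :
  filterlim (fun y => exp (r * ln y) * lnpdf mu s y) (at_right 0) (locally 0).
Proof.
  set (c := lnmoment (r - 1) / (sqrt 2 * s * sqrt PI)).
  apply (filterlim_ext_loc (fun y => c * gauss (lnzscore (r - 1) y))).
  - exists (mkposreal 1 Rlt_0_1). intros y _ Hy. symmetry.
    apply lnpdf_moment_density_shift, Hy.
  - assert (Hm : is_lim gauss m_infty 0).
    { apply (is_lim_gauss m_infty), (is_lim_mult _ _ m_infty m_infty m_infty);
        [apply is_lim_id | apply is_lim_id | simpl; tauto]. }
    rewrite <- (Rmult_0_r c) at 2. apply filterlim_scal_l_R.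
    exact (filterlim_comp _ _ _ _ _ _ _ _ (filterlim_lnzscore_0 (r - 1)) Hm).
Qed.

Lemma is_derive_lnpdf_moment_primitive (r x : R) : 0 < x ->
  is_derive (fun y => lnmoment r / sqrt PI * gauss_int (lnzscore r y)) x
    (exp (r * ln x) * lnpdf mu s x).
Proof.
  intros Hx. generalize sqrt2_pos sqrtPI_pos. intros H2 HPI.
  rewrite lnpdf_moment_density by exact Hx.
  replace (lnmoment r / sqrt PI * gauss (lnzscore r x) / (sqrt 2 * s * x))
    with (lnmoment r / sqrt PI * (/ x / (sqrt 2 * s) * gauss (lnzscore r x)))
    by (field; repeat split; lra).
  apply is_derive_scal.
  apply (@is_derive_comp R_AbsRing R_NormedModule gauss_int (lnzscore r));
    [apply is_derive_gauss_int |].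
  unfold lnzscore. auto_derive; [exact Hx | field; repeat split; lra].
Qed.

Lemma ImpInt_lnpdf_moment (r : R) :
  ImpInt (fun x => exp (r * ln x) * lnpdf mu s x) (lnmoment r).
Proof.
  set (c := lnmoment r / sqrt PI).
  replace (lnmoment r) with (c * (sqrt PI / 2) - c * (- (sqrt PI / 2)))
    by (unfold c; field; generalize sqrtPI_pos; lra).
  apply (ImpInt_of_antiderivative _ (fun x => c * gauss_int (lnzscore r x))).
  - intros x Hx. rewrite lnpdf_nonpos by exact Hx. ring.
  - apply continuous_lnpdf_moment.
  - apply filterlim_lnpdf_moment_0.
  - apply is_derive_lnpdf_moment_primitive.
  - apply filterlim_scal_l_R.
    exact (filterlim_comp _ _ _ _ _ _ _ _ (filterlim_lnzscore_0 r) is_lim_gauss_int_m).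
  - apply filterlim_scal_l_R.
    exact (filterlim_comp _ _ _ _ _ _ _ _ (is_lim_lnzscore_p r) is_lim_gauss_int_p).
Qed.

End LognormalMoment.

Lemma sumR_ext (m : nat) (f g : nat -> R) :
  (forall i, (i < m)%nat -> f i = g i) -> sumR m f = sumR m g.
Proof.
  induction m as [| m IH]; intros E; simpl; [reflexivity |].
  rewrite IH by (intros i Hi; apply E; lia). rewrite E by lia. reflexivity.
Qed.

Lemma prodR_ext (m : nat) (f g : nat -> R) :
  (forall i, (i < m)%nat -> f i = g i) -> prodR m f = prodR m g.
Proof.
  induction m as [| m IH]; intros E; simpl; [reflexivity |].
  rewrite IH by (intros i Hi; apply E; lia). rewrite E by lia. reflexivity.
Qed.

Lemma upd_same (v : nat -> R) (n : nat) (x : R) : upd v n x n = x.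
Proof. unfold upd. destruct (Nat.eq_dec n n); [reflexivity | lia]. Qed.

Lemma upd_other (v : nat -> R) (n i : nat) (x : R) : i <> n -> upd v n x i = v i.
Proof. intros Hi. unfold upd. destruct (Nat.eq_dec i n); [lia | reflexivity]. Qed.

Lemma sum_f_R0_mult (A B : nat -> R) (N M : nat) (K : R) :
  sum_f_R0 A N * sum_f_R0 B M * K
  = sum_f_R0 (fun i => sum_f_R0 (fun j => A i * B j * K) M) N.
Proof.
  assert (HB : forall c, sum_f_R0 (fun j => c * B j * K) M = c * sum_f_R0 B M * K).
  { intros c. induction M as [| M IH]; simpl; [ring | rewrite IH; ring]. }
  induction N as [| N IH]; simpl; rewrite HB; [ring | rewrite <- IH; ring].
Qed.

Lemma pow_inv_pow_lnpdf (mu s : R) (p q : nat) (x : R) :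
  x ^ p * (/ x) ^ q * lnpdf mu s x = exp ((INR p - INR q) * ln x) * lnpdf mu s x.
Proof.
  destruct (Rlt_or_le 0 x) as [Hx | Hx].
  - rewrite <- (Rpower_pow p x Hx), <- (Rpower_pow q (/ x)) by (apply Rinv_0_lt_compat, Hx).
    unfold Rpower. rewrite ln_Rinv, <- exp_plus by exact Hx. do 2 f_equal. ring.
  - rewrite lnpdf_nonpos by exact Hx. ring.
Qed.

Lemma binom_0 (n : nat) : Binomial.C n 0 = 1.
Proof. unfold Binomial.C. rewrite Nat.sub_0_r. simpl. field. apply INR_fact_neq_0. Qed.

Lemma binom_diag (n : nat) : Binomial.C n n = 1.
Proof. unfold Binomial.C. rewrite Nat.sub_diag. simpl. field. apply INR_fact_neq_0. Qed.

Lemma binom_2_1 : Binomial.C 2 1 = 2.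
Proof. unfold Binomial.C. simpl. field. Qed.

Section JointMoments.
Variables (mu s : R).
Hypothesis s_pos : 0 < s.

Definition lnmoment_nat (p q : nat) : R := lnmoment mu s (INR p - INR q).

(* E[P^a Q^b] for P = X_1 + ... + X_n and Q = 1/X_1 + ... + 1/X_n; the
   recursion expands (P + X_n)^a (Q + 1/X_n)^b binomially. *)
Fixpoint joint_moment (n a b : nat) : R :=
  match n with
  | O => 0 ^ a * 0 ^ b
  | S n' => sum_f_R0 (fun i => sum_f_R0 (fun j =>
        Binomial.C a i * Binomial.C b j * joint_moment n' i j * lnmoment_nat (a - i) (b - j)) b) a
  end.

Lemma IterInt_joint_moment (n : nat) : forall a b : nat,
  IterInt n (fun v => sumR n v ^ a * sumR n (fun i => / v i) ^ b * joint_lnpdf mu s n v)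
    (joint_moment n a b).
Proof.
  induction n as [| n IH]; intros a b; [simpl; unfold joint_lnpdf; simpl; ring |].
  (* The outer integration variable is x = v n, with P = P' + x and Q = Q' + 1/x. *)
  exists (fun x => sum_f_R0 (fun i => sum_f_R0 (fun j =>
      Binomial.C a i * Binomial.C b j * (x ^ (a - i) * (/ x) ^ (b - j) * lnpdf mu s x)
      * joint_moment n i j) b) a).
  split.
  - apply ImpInt_sum. intros i _. apply ImpInt_sum. intros j _.
    apply (ImpInt_ext (fun x => Binomial.C a i * Binomial.C b j * joint_moment n i j
      * (exp ((INR (a - i) - INR (b - j)) * ln x) * lnpdf mu s x))).
    { intros x. rewrite <- pow_inv_pow_lnpdf. ring. }
    apply ImpInt_scal, ImpInt_lnpdf_moment, s_pos.
  - intros x.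
    eapply IterInt_ext.
    2:{ apply (IterInt_sum n (fun i v => sum_f_R0 (fun j =>
          (Binomial.C a i * Binomial.C b j * (x ^ (a - i) * (/ x) ^ (b - j) * lnpdf mu s x))
          * (sumR n v ^ i * sumR n (fun k => / v k) ^ j * joint_lnpdf mu s n v)) b)).
        intros i _. apply IterInt_sum. intros j _. apply IterInt_scal, IH. }
    intros v. unfold joint_lnpdf. simpl.
    rewrite (sumR_ext n (upd v n x) v), (sumR_ext n (fun i => / upd v n x i) (fun i => / v i)),
      (prodR_ext n (fun i => lnpdf mu s (upd v n x i)) (fun i => lnpdf mu s (v i)))
      by (intros i Hi; rewrite upd_other by lia; reflexivity).
    rewrite upd_same, !binomial, sum_f_R0_mult. symmetry.
    apply sum_eq. intros i _. apply sum_eq. intros j _. ring.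
Qed.

Let m1 := lnmoment mu s 1.
Let minv := lnmoment mu s (-1).

Lemma lnmoment_nat_succ (p q : nat) : lnmoment_nat (S p) (S q) = lnmoment_nat p q.
Proof. unfold lnmoment_nat. rewrite !S_INR. f_equal. ring. Qed.

Lemma lnmoment_nat_0_0 : lnmoment_nat 0 0 = 1.
Proof. unfold lnmoment_nat, lnmoment. rewrite <- exp_0. f_equal. simpl. field. Qed.

Lemma lnmoment_nat_1_0 : lnmoment_nat 1 0 = m1.
Proof. unfold lnmoment_nat, m1. f_equal. simpl. ring. Qed.

Lemma lnmoment_nat_0_1 : lnmoment_nat 0 1 = minv.
Proof. unfold lnmoment_nat, minv. f_equal. simpl. ring. Qed.

Lemma lnmoment_nat_2_0 : lnmoment_nat 2 0 = m1 ^ 3 * minv.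
Proof.
  transitivity (m1 * m1 * m1 * minv); [| ring].
  unfold lnmoment_nat, m1, minv, lnmoment. rewrite <- !exp_plus. f_equal. simpl. field.
Qed.

Lemma lnmoment_nat_0_2 : lnmoment_nat 0 2 = m1 * minv ^ 3.
Proof.
  transitivity (m1 * minv * minv * minv); [| ring].
  unfold lnmoment_nat, m1, minv, lnmoment. rewrite <- !exp_plus. f_equal. simpl. field.
Qed.

Lemma m1_mul_minv : m1 * minv = exp (s ^ 2).
Proof. unfold m1, minv, lnmoment. rewrite <- exp_plus. f_equal. field. Qed.

Ltac unfold_joint_moment IH :=
  cbn [joint_moment sum_f_R0 Nat.sub];
  rewrite ?lnmoment_nat_succ, ?binom_0, ?binom_diag, ?binom_2_1, ?lnmoment_nat_0_0,
    ?lnmoment_nat_1_0, ?lnmoment_nat_0_1, ?lnmoment_nat_2_0, ?lnmoment_nat_0_2, ?IH, ?S_INR.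

Lemma joint_moment_0_0 (n : nat) : joint_moment n 0 0 = 1.
Proof. induction n as [| n IH]; [simpl; ring | unfold_joint_moment IH; ring]. Qed.

Lemma joint_moment_1_0 (n : nat) : joint_moment n 1 0 = INR n * m1.
Proof.
  induction n as [| n IH]; [simpl; ring | unfold_joint_moment IH].
  rewrite joint_moment_0_0. ring.
Qed.

Lemma joint_moment_0_1 (n : nat) : joint_moment n 0 1 = INR n * minv.
Proof.
  induction n as [| n IH]; [simpl; ring | unfold_joint_moment IH].
  rewrite joint_moment_0_0. ring.
Qed.

Lemma joint_moment_1_1 (n : nat) :
  joint_moment n 1 1 = INR n * (1 - m1 * minv) + INR n ^ 2 * (m1 * minv).
Proof.
  induction n as [| n IH]; [simpl; ring | unfold_joint_moment IH].
  rewrite joint_moment_0_0, joint_moment_1_0, joint_moment_0_1. ring.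
Qed.

Lemma joint_moment_2_0 (n : nat) :
  joint_moment n 2 0 = INR n * (m1 ^ 3 * minv - m1 ^ 2) + INR n ^ 2 * m1 ^ 2.
Proof.
  induction n as [| n IH]; [simpl; ring | unfold_joint_moment IH].
  rewrite joint_moment_0_0, joint_moment_1_0. ring.
Qed.

Lemma joint_moment_0_2 (n : nat) :
  joint_moment n 0 2 = INR n * (m1 * minv ^ 3 - minv ^ 2) + INR n ^ 2 * minv ^ 2.
Proof.
  induction n as [| n IH]; [simpl; ring | unfold_joint_moment IH].
  rewrite joint_moment_0_0, joint_moment_0_1. ring.
Qed.

Lemma joint_moment_2_1 (n : nat) :
  joint_moment n 2 1 =
    INR n * (- m1 - m1 ^ 3 * minv ^ 2 + 2 * m1 ^ 2 * minv)
  + INR n ^ 2 * (2 * m1 + m1 ^ 3 * minv ^ 2 - 3 * m1 ^ 2 * minv)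
  + INR n ^ 3 * (m1 ^ 2 * minv).
Proof.
  induction n as [| n IH]; [simpl; ring | unfold_joint_moment IH].
  rewrite joint_moment_0_0, joint_moment_1_0, joint_moment_0_1, joint_moment_1_1,
    joint_moment_2_0. ring.
Qed.

Lemma joint_moment_1_2 (n : nat) :
  joint_moment n 1 2 =
    INR n * (- minv - m1 ^ 2 * minv ^ 3 + 2 * m1 * minv ^ 2)
  + INR n ^ 2 * (2 * minv + m1 ^ 2 * minv ^ 3 - 3 * m1 * minv ^ 2)
  + INR n ^ 3 * (m1 * minv ^ 2).
Proof.
  induction n as [| n IH]; [simpl; ring | unfold_joint_moment IH].
  rewrite joint_moment_0_0, joint_moment_1_0, joint_moment_0_1, joint_moment_1_1,
    joint_moment_0_2. ring.
Qed.

Lemma joint_moment_2_2 (n : nat) :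
  let w := m1 * minv in
  joint_moment n 2 2 =
    INR n * (- 1 + 4 * w - w ^ 4 + 4 * w ^ 3 - 6 * w ^ 2)
  + INR n ^ 2 * (2 - 8 * w + w ^ 4 - 6 * w ^ 3 + 11 * w ^ 2)
  + INR n ^ 3 * (4 * w + 2 * w ^ 3 - 6 * w ^ 2)
  + INR n ^ 4 * w ^ 2.
Proof.
  intros w. unfold w.
  induction n as [| n IH]; [simpl; ring | unfold_joint_moment IH].
  rewrite joint_moment_0_0, joint_moment_1_0, joint_moment_0_1, joint_moment_1_1,
    joint_moment_2_0, joint_moment_0_2, joint_moment_2_1, joint_moment_1_2. ring.
Qed.

End JointMoments.

Lemma khat_eq (n : nat) (v : nat -> R) :
  khat n v = INR n / (INR n - 1) * (sumR n v * sumR n (fun i => / v i) / (INR n * INR n) - 1).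
Proof.
  unfold khat, A_n, H_n. do 2 f_equal. unfold Rdiv. rewrite !Rinv_mult, Rinv_inv. ring.
Qed.

Section Estimator.
Variables (mu s : R) (n : nat).
Hypothesis s_pos : 0 < s.

Let PQ (v : nat -> R) : R := sumR n v * sumR n (fun i => / v i).

Lemma HasExpect_quadratic_PQ (c2 c1 c0 : R) :
  HasExpect mu s n (fun v => c2 * PQ v ^ 2 + c1 * PQ v + c0)
    (c2 * joint_moment mu s n 2 2 + c1 * joint_moment mu s n 1 1 + c0 * joint_moment mu s n 0 0).
Proof.
  unfold HasExpect.
  apply (IterInt_ext n (fun v =>
    c2 * (sumR n v ^ 2 * sumR n (fun i => / v i) ^ 2 * joint_lnpdf mu s n v)
    + c1 * (sumR n v ^ 1 * sumR n (fun i => / v i) ^ 1 * joint_lnpdf mu s n v)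
    + c0 * (sumR n v ^ 0 * sumR n (fun i => / v i) ^ 0 * joint_lnpdf mu s n v))).
  { intros v. unfold PQ. ring. }
  repeat apply IterInt_plus; apply IterInt_scal, IterInt_joint_moment, s_pos.
Qed.

Lemma HasVar_khat : (2 <= n)%nat ->
  let k := exp (s ^ 2) - 1 in
  HasVar mu s n (khat n) (2 / (INR n - 1) * k ^ 2 * (1 + k + k ^ 2 / (2 * INR n))).
Proof.
  intros Hn k.
  assert (HN : 2 <= INR n) by (apply (le_INR 2), Hn).
  set (c := INR n / (INR n - 1)).
  exists (c / INR n ^ 2 * joint_moment mu s n 1 1 + (- c) * joint_moment mu s n 0 0),
         (c ^ 2 / INR n ^ 4 * joint_moment mu s n 2 2 + (- 2 * c ^ 2 / INR n ^ 2)
            * joint_moment mu s n 1 1 + c ^ 2 * joint_moment mu s n 0 0).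
  split; [| split].
  - rewrite <- (Rplus_0_l (c / INR n ^ 2 * _)), <- (Rmult_0_l (joint_moment mu s n 2 2)).
    eapply IterInt_ext; [| apply HasExpect_quadratic_PQ].
    intros v. simpl. rewrite khat_eq. unfold PQ, c. field. lra.
  - eapply IterInt_ext; [| apply HasExpect_quadratic_PQ].
    intros v. simpl. rewrite khat_eq. unfold PQ, c. field. lra.
  - rewrite joint_moment_2_2, joint_moment_1_1, joint_moment_0_0, m1_mul_minv.
    unfold c, k. field. lra.
Qed.
End Estimator.

Theorem proposition4 (muY sigmaY : R) (n : nat) :
  0 < sigmaY -> (2 <= n)%nat ->
  let k := exp (sigmaY ^ 2) - 1 in
  exists V : R,
    HasVar muY sigmaY n (khat n) V /\
    V = 2 / (INR n - 1) * k ^ 2 * (1 + k + k ^ 2 / (2 * INR n)) /\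
    sqrt V = k * sqrt (2 / (INR n - 1) * (1 + k + k ^ 2 / (2 * INR n))).
Proof.
  intros Hs Hn k.
  assert (Hk : 0 <= k).
  { unfold k. generalize (exp_ineq1_le (sigmaY ^ 2)) (pow2_ge_0 sigmaY). lra. }
  eexists. split; [apply HasVar_khat; assumption | split; [reflexivity |]].
  fold k.
  replace (2 / (INR n - 1) * k ^ 2 * (1 + k + k ^ 2 / (2 * INR n)))
    with (k ^ 2 * (2 / (INR n - 1) * (1 + k + k ^ 2 / (2 * INR n)))) by ring.
  rewrite sqrt_mult_alt, sqrt_pow2 by (apply pow2_ge_0 || exact Hk). reflexivity.
Qed.
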